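(* For every integer $d\ge0$, the Legendre basis matrix $B^{(d)}$ is $(d+1)$-banded: $b^{(d)}_{k,\ell}=0$ whenever $|k-\ell|>d+1$.
   Context: Let $\{p_k\}_{k\ge0}$ be the orthonormal Legendre polynomials on $[-1,1]$: $p_k$ has exact degree $k$, positive leading coefficient, and $\int_{-1}^1 p_k(t)p_\ell(t)\,dt=\delta_{k\ell}$. Let $\Theta$ be the Heaviside function, $\Theta(x)=0$ for $x<0$ and $\Theta(x)=1$ for $x\ge0$. The Legendre basis matrix of degree $d$ is the infinite matrix $B^{(d)}=[b^{(d)}_{k,\ell}]_{k,\ell\ge0}$ with $b^{(d)}_{k,\ell}=\int_{-1}^1\int_{-1}^1 p_d(\tau)\Theta(\tau-\rho)p_k(\tau)p_\ell(\rho)\,d\rho\,d\tau$, i.e. the coefficient matrix of $p_d(t)\Theta(t-s)$. *)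

From HB Require Import structures.
From mathcomp Require Import all_boot all_order all_algebra.
From mathcomp Require Import all_classical all_reals all_analysis.
Set Implicit Arguments. Unset Strict Implicit. Unset Printing Implicit Defensive.
Import Order.TTheory GRing.Theory Num.Theory.
Local Open Scope classical_set_scope.
Local Open Scope ring_scope.

Definition heaviside {R : realType} (x : R) : R := if x < 0 then 0 else 1.

Definition int11 {R : realType} (f : R -> R) : R :=
  Rintegral (@lebesgue_measure R) `[(-1)%R, 1%R] f.

Definition orthonormal_legendre {R : realType} (p : nat -> {poly R}) : Prop :=
  (forall k, size (p k) = k.+1) /\
  (forall k, 0 < lead_coef (p k)) /\
  (forall k l, int11 (fun t => (p k).[t] * (p l).[t]) = (k == l)%:R).

Definition legendre_basis_entry {R : realType} (p : nat -> {poly R})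
  (d k l : nat) : R :=
  int11 (fun tau => int11 (fun rho =>
    (p d).[tau] * heaviside (tau - rho) * (p k).[tau] * (p l).[rho])).

(* Write I(q) for the integral of a polynomial q over [-1,1].  For tau in
   [-1,1] the inner integral of b^(d)_{k,l} only sees rho <= tau, so it is
   p_d(tau) p_k(tau) P(tau), where P is the antiderivative of p_l vanishing
   at -1; hence b^(d)_{k,l} = I(p_d p_k P), and P has degree l+1.
   - If k > l+d+1, then p_d P has degree < k, so I(p_k (p_d P)) = 0 because
     p_k is orthogonal to every polynomial of lower degree.
   - If l > k+d+1, write p_d p_k = Q' with Q(1) = 0; integrating by parts,
     and using P(-1) = 0, I(Q' P) = - I(Q p_l), which vanishes since Q has
     degree k+d+1 < l. *)

From HB Require Import structures.
From mathcomp Require Import all_boot all_order all_algebra.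
From mathcomp Require Import all_classical all_reals all_analysis.
From mathcomp Require Import ring zify.
Import Order.TTheory GRing.Theory Num.Theory.
Set Implicit Arguments. Unset Strict Implicit.
Local Open Scope ring_scope.
Local Open Scope classical_set_scope.

Section PolynomialIntegral.
Variable R : realType.
Implicit Types q F G : {poly R}.

Lemma Rintegral_poly q F (a b : R) : a <= b -> deriv F = q ->
  Rintegral (@lebesgue_measure R) `[a, b] (horner q) = F.[b] - F.[a].
Proof.
move=> ab dF; have [->|ab'] := eqVneq a b.
  by rewrite set_itv1 Rintegral_set1 subrr.
have ltab : a < b by rewrite lt_neqAle ab' ab.
have poly_LR (r : {poly R}) : derivable_oo_LRcontinuous (horner r) a b.
  split; first by move=> x _; exact: derivable_horner.
  - by apply: cvg_at_right_filter; exact: continuous_horner.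
  - by apply: cvg_at_left_filter; exact: continuous_horner.
rewrite /Rintegral (@continuous_FTC2 _ (horner q) (horner F)) //=.
- exact: derivable_oo_LRcontinuous_within (poly_LR q).
- by move=> x _; rewrite -derivE dF.
Qed.

Definition antideriv (a : R) q : {poly R} :=
  let P := \poly_(i < (size q).+1) (if i is j.+1 then q`_j / j.+1%:R else 0) in
  P - P.[a]%:P.

Lemma antideriv_deriv a q : deriv (antideriv a q) = q.
Proof.
rewrite /antideriv derivB derivC subr0; apply/polyP => i.
rewrite coef_deriv coef_poly ltnS; case: ltnP => hi.
  by rewrite -[RHS](@divfK _ i.+1%:R) ?pnatr_eq0 // mulr_natr.
by rewrite mul0rn nth_default.
Qed.

Lemma antideriv_root a q : (antideriv a q).[a] = 0.
Proof. by rewrite /antideriv hornerD hornerN hornerC subrr. Qed.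

Lemma size_antideriv a q : (size (antideriv a q) <= (size q).+1)%N.
Proof.
rewrite (leq_trans (size_polyD _ _)) // size_polyN size_polyC geq_max.
by rewrite size_poly (leq_trans (leq_b1 _)).
Qed.

Definition pint q : R := int11 (horner q).

Lemma pint_deriv F : pint (deriv F) = F.[1] - F.[-1].
Proof. by rewrite /pint /int11 (@Rintegral_poly _ F) // lerN10. Qed.

Lemma pintD q r : pint (q + r) = pint q + pint r.
Proof.
rewrite -[q](antideriv_deriv 0) -[r](antideriv_deriv 0) -derivD.
by rewrite !pint_deriv !hornerD; ring.
Qed.

Lemma pintZ c q : pint (c *: q) = c * pint q.
Proof.
by rewrite -[q](antideriv_deriv 0) -derivZ !pint_deriv !hornerZ; ring.
Qed.

Lemma pint0 : pint 0 = 0.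
Proof. by rewrite -(scale0r 0) pintZ mul0r. Qed.

Lemma pint_by_parts F G :
  pint (deriv F * G) = F.[1] * G.[1] - F.[-1] * G.[-1] - pint (F * deriv G).
Proof. by have := pint_deriv (F * G); rewrite derivM pintD !hornerM => <-; ring. Qed.

(* Against the Heaviside kernel Theta(tau - rho), integrating in rho over
   [-1,1] amounts to integrating over [-1,tau]. *)
Lemma int11_heaviside (a b tau : R) q : -1 <= tau <= 1 ->
  int11 (fun rho => a * heaviside (tau - rho) * b * q.[rho]) =
  a * b * (antideriv (-1) q).[tau].
Proof.
move=> /andP[t1 t2]; rewrite /int11.
have cut : {in `[-1, 1], (fun rho => a * heaviside (tau - rho) * b * q.[rho])
   =1 (horner ((a * b) *: q)) \_ [set x | x <= tau]}.
  move=> x _; rewrite /patch /heaviside subr_lt0 hornerZ.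
  have [xt|tx] := leP x tau.
    by rewrite ifT ?in_setE //; ring.
  by rewrite ifF ?mulr0 ?mul0r //; apply/negP; rewrite in_setE /= leNgt tx.
have itv : `[-1, 1] `&` [set x | x <= tau] = `[-1, tau].
  apply/seteqP; split => x /=; rewrite !in_itv /=.
  - by move=> [/andP[-> _] ->].
  - by move=> /andP[-> h]; rewrite (le_trans h t2).
transitivity (Rintegral (@lebesgue_measure R) `[-1, 1]
  ((horner ((a * b) *: q)) \_ [set x | x <= tau])); first exact: eq_Rintegral.
rewrite -Rintegral_mkcondr itv.
rewrite (@Rintegral_poly _ ((a * b) *: antideriv (-1) q)) //.
  by rewrite !hornerZ antideriv_root; ring.
by rewrite derivZ antideriv_deriv.
Qed.

Lemma basis_entry_pint (p : nat -> {poly R}) d k l :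
  legendre_basis_entry p d k l = pint (p d * p k * antideriv (-1) (p l)).
Proof.
apply: eq_Rintegral => t ht.
rewrite -[RHS]/((p d * p k * antideriv (-1) (p l)).[t]) !hornerM.
by apply: int11_heaviside; move: ht; rewrite inE /= in_itv.
Qed.

End PolynomialIntegral.

Section Legendre.
Variables (R : realType) (p : nat -> {poly R}).
Hypothesis Hp : orthonormal_legendre p.
Implicit Types q : {poly R}.

Let size_p k : size (p k) = k.+1. Proof. by case: Hp. Qed.

Lemma pint_orth k j : pint (p k * p j) = (k == j)%:R.
Proof.
case: Hp => _ [_ orth]; rewrite -orth /pint; congr int11.
by apply/funext => t; rewrite hornerM.
Qed.

(* p_k is orthogonal to every polynomial of degree < k: subtracting from q a
   multiple of p_n kills its coefficient of degree n, so induct on size q. *)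
Lemma pint_orth_lower k q : (size q <= k)%N -> pint (p k * q) = 0.
Proof.
suff orth_below n : forall q, (size q <= n)%N -> (n <= k)%N -> pint (p k * q) = 0.
  by move=> hqk; exact: orth_below (leqnn _) hqk.
elim: n => [|n IH] {}q hq hnk.
  by move: hq; rewrite leqn0 size_poly_eq0 => /eqP ->; rewrite mulr0 pint0.
have lead_nz : (p n)`_n != 0.
  have := lead_coefE (p n); rewrite size_p /= => <-.
  by rewrite gt_eqF //; case: Hp => _ [].
set r := q - (q`_n / (p n)`_n) *: p n.
have hr : (size r <= n)%N.
  apply/leq_sizeP => j; rewrite leq_eqVlt => /orP[/eqP <-|hj].
    by rewrite coefB coefZ divfK ?subrr.
  have qj : q`_j = 0 by rewrite nth_default // (leq_trans hq hj).
  have pj : (p n)`_j = 0 by rewrite nth_default ?size_p.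
  by rewrite coefB coefZ qj pj mulr0 subrr.
have -> : q = r + (q`_n / (p n)`_n) *: p n by rewrite /r subrK.
rewrite mulrDr pintD -scalerAr pintZ pint_orth IH ?(ltnW hnk) //.
by rewrite (gtn_eqF hnk) mulr0 addr0.
Qed.

(* Entries far below the diagonal vanish: p_d P has degree d + l + 1 < k. *)
Lemma basis_entry_below d k l : (l + d + 1 < k)%N ->
  legendre_basis_entry p d k l = 0.
Proof.
move=> hlk; rewrite basis_entry_pint -mulrA mulrCA pint_orth_lower //.
rewrite (leq_trans (size_polyMleq _ _)) // size_p.
have := size_antideriv (-1) (p l); rewrite size_p; lia.
Qed.

(* Entries far above the diagonal vanish: integrate by parts against the
   antiderivative Q of p_d p_k vanishing at 1, whose degree is k + d + 1 < l. *)
Lemma basis_entry_above d k l : (k + d + 1 < l)%N ->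
  legendre_basis_entry p d k l = 0.
Proof.
move=> hkl; rewrite basis_entry_pint -(antideriv_deriv 1 (p d * p k)).
rewrite pint_by_parts !antideriv_root mul0r mulr0 subrr sub0r antideriv_deriv.
rewrite mulrC pint_orth_lower ?oppr0 //.
apply: (leq_trans (size_antideriv _ _)).
have := size_polyMleq (p d) (p k); rewrite !size_p; lia.
Qed.

End Legendre.

Theorem corollary3p4 (R : realType) (p : nat -> {poly R}) :
  orthonormal_legendre p ->
  forall d k l : nat, (d.+1 < `|(k%:Z - l%:Z)%R|)%N ->
    legendre_basis_entry p d k l = 0.
Proof.
move=> Hp d k l far.
have [below|above] : (l + d + 1 < k)%N \/ (k + d + 1 < l)%N by lia.
- exact: basis_entry_below.
- exact: basis_entry_above.
Qed.
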